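(* With $g_n$, $C_t$, $D_t$ as in the context, for every $t\ge1$: \[g_{2t+1}(t)=\frac12+\frac{D_t}{2C_t},\qquad g_{2t}(t)=1-\frac{D_t}{C_t},\qquad g_{2t}(t-1)=\frac{2D_t}{C_t},\] and in particular $g_{2t}(t-1)+g_{2t}(t)=1+D_t/C_t$.
   Context: Let $\mathcal X=\{A,B,C,D\}$ and let $(X_i)_{i\ge1}$ be the first-order Markov chain on $\mathcal X$ with $\mathbb P(X_1=x)=1/4$ for all $x$ and transitions: from $A$ to $A$ or $C$ w.p. $1/2$ each; from $B$ to $B$ or $D$ w.p. $1/2$ each; from $C$ and from $D$ to each of $A,B,C,D$ w.p. $1/4$. A nonempty string is admissible if all consecutive transitions have positive probability; $\mathcal A$ is the set of admissible nonempty strings; $K(u):=-\log_2\mathbb P(X_1^m=u)$ for $u=x_1^m\in\mathcal A$. Shortlex source code $C$: order nonempty binary strings by length then lexicographically as $b_1,b_2,\dots$; order $\mathcal A$ as $u_1,u_2,\dots$ by increasing $K$, then increasing length, then lexicographically with $A<B<C<D$; set $C(u_j):=b_j$. Let $K_n:=K(X_1^n)$, $L_n:=|C(X_1^n)|$, $I_n:=\mathbf 1\{L_n=K_n-1\}$, $X:=\#\{i\in\{1,\dots,n-1\}:X_i\in\{C,D\}\}$, and $g_n(x):=\mathbb P(I_n=1\mid X=x)$. For integers $m,j$ let $U(m,j):=\binom{m-j}{j}2^j$ if $0\le j$, $2j\le m$, else $0$; $C_t:=\binom{2t}{t}2^t$; $D_t:=\sum_{j=0}^{t-1}U(3t,j)-\sum_{j\ge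 t+1}U(3t,j)$. *)

From HB Require Import structures.
From mathcomp Require Import all_boot all_order all_algebra.
From mathcomp Require Import reals exp.
Set Implicit Arguments. Unset Strict Implicit. Unset Printing Implicit Defensive.
Import Order.TTheory GRing.Theory Num.Theory.

(* Alphabet {A,B,C,D} encoded as 'I_4 with A=0 < B=1 < C=2 < D=3,
   so the nat order on 'I_4 is the alphabetical order A<B<C<D. *)
Definition lA : 'I_4 := inord 0.
Definition lB : 'I_4 := inord 1.
Definition lC : 'I_4 := inord 2.
Definition lD : 'I_4 := inord 3.

Section Chain.
Variable R : realType.
Local Open Scope ring_scope.

Definition trans (a b : 'I_4) : R :=
  if a == lA then (if (b == lA) || (b == lC) then 2^-1 else 0)
  else if a == lB then (if (b == lB) || (b == lD) then 2^-1 else 0)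
  else 4^-1.

Fixpoint path_prob (a : 'I_4) (s : seq 'I_4) : R :=
  if s is b :: s' then trans a b * path_prob b s' else 1.

(* P(X_1^m = u) for u nonempty; the empty string gets 0 (it is excluded). *)
Definition prob (u : seq 'I_4) : R :=
  if u is a :: s then 4^-1 * path_prob a s else 0.

(* admissible = nonempty with all consecutive transitions of positive
   probability, i.e. positive probability *)
Definition admissible (u : seq 'I_4) : bool := 0 < prob u.

Definition Kf (u : seq 'I_4) : R := - ln (prob u) / ln 2.

(* strict lexicographic order (used on strings of equal length) *)
Fixpoint lexlt (v u : seq 'I_4) : bool :=
  match v, u with
  | a :: v', b :: u' => ((a < b)%N) || ((a == b) && lexlt v' u')
  | _, _ => false
  end.

(* v strictly precedes u in the order of the source code:
   increasing K, then increasing length, then lexicographic *)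
Definition prec (v u : seq 'I_4) : bool :=
  (Kf v < Kf u) ||
  ((Kf v == Kf u) &&
   ((size v < size u)%N || ((size v == size u) && lexlt v u))).

Definition all_strings (m : nat) : seq (seq 'I_4) :=
  map (fun w : m.-tuple 'I_4 => val w) (enum {: m.-tuple 'I_4}).

(* rank j with u = u_j (1-based).  Every admissible v preceding u has
   |v| + 1 <= K(v) <= K(u) <= 2|u|, so counting over lengths
   1 .. 4|u|+4 captures all of them. *)
Definition rank (u : seq 'I_4) : nat :=
  (\sum_(m < 4 * size u + 4)
     count (fun v => admissible v && prec v u) (all_strings m.+1)).+1.

(* length of b_j, the j-th nonempty binary string in shortlex order:
   b_j has length l iff 2^l - 1 <= j <= 2^(l+1) - 2, i.e. l = floor(log2(j+1)) *)
Definition bin_len (j : nat) : nat := trunc_log 2 j.+1.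

Definition codelen (u : seq 'I_4) : nat := bin_len (rank u).

Definition Ind (u : seq 'I_4) : bool := (codelen u)%:R == Kf u - 1.

Definition Xcnt (n : nat) (u : seq 'I_4) : nat :=
  count (fun a => (a == lC) || (a == lD)) (take n.-1 u).

(* g_n(x) = P(I_n = 1 | X = x) *)
Definition g (n x : nat) : R :=
  (\sum_(w : n.-tuple 'I_4 | (Xcnt n w == x) && Ind w) prob w) /
  (\sum_(w : n.-tuple 'I_4 | Xcnt n w == x) prob w).

End Chain.

Definition U (m j : nat) : nat :=
  if (2 * j <= m)%N then 'C(m - j, j) * 2 ^ j else 0.

Definition Ct (t : nat) : nat := 'C(2 * t, t) * 2 ^ t.

(* D_t = sum_{j=0}^{t-1} U(3t,j) - sum_{j>=t+1} U(3t,j); U(3t,j)=0 for j>3t *)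
Definition Dt (t : nat) : int :=
  (\sum_(0 <= j < t) (U (3 * t) j)%:Z - \sum_(t.+1 <= j < (3 * t).+1) (U (3 * t) j)%:Z)%R.

(* Under the chain, P(u) = 2^-K(u) with K(u) = |u| + 1 + X(u) for admissible u, so for fixed
   length n and X = x the 4 U(N, x) admissible strings (N = n - 1 + x) are equally likely and
   share K = N + 2.  Counting the strings that precede u in the code order (all strings of
   smaller K, then those of the same K and shorter length, then the lexicographically smaller
   strings of u's own class), and using that the totals J_N = sum_j U(N, j) are Jacobsthal
   numbers, |C(u)| = K(u) - 1 holds exactly for the lexicographically first
   2 U(N, x) + 2 B(N, x) strings of the class, where B(N, x) is the U(N, _)-mass below x minus
   the mass above x.  Hence g_n(x) = 1/2 + B(N, x) / (2 U(N, x)) whenever |B(N, x)| <= U(N, x).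
   The theorem is about N = 3t, 3t - 1, 3t - 2, where B(3t, t) = D_t and U(3t, t) = C_t.
   B inherits the Pascal-type recurrence of U; by induction on t it gives
   2 B(3t - 1, t) = C_t - 2 D_t, 4 B(3t - 2, t - 1) = 4 D_t - C_t and D_(t+1) = C_t - D_t,
   and the last yields 0 <= 2 D_t <= C_t. *)

From HB Require Import structures.
From mathcomp Require Import all_boot all_order all_algebra.
From mathcomp Require Import reals exp.
From mathcomp Require Import zify ring lra.
Import Order.TTheory GRing.Theory Num.Theory.

Set Implicit Arguments.
Unset Strict Implicit.
Unset Printing Implicit Defensive.

Lemma sum_nat_delta B z (F : nat -> nat) :
  z < B -> \sum_(0 <= y < B) (z == y) * F y = F z.
Proof.
move=> lt_zB; rewrite (eq_bigr (fun y => if y == z then F y else 0)); last first.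
  by move=> y _; rewrite eq_sym; case: eqP; rewrite ?mul1n ?mul0n.
by rewrite -big_mkcond big_nat1_eq lt_zB.
Qed.

Lemma sum_nat_leq_cut L M (F : nat -> nat) :
  M < L -> \sum_(0 <= y < L) (y <= M) * F y = \sum_(0 <= y < M.+1) F y.
Proof.
move=> lt_ML; rewrite [RHS](big_nat_widen _ _ L) // [RHS]big_mkcond /=.
by apply: eq_bigr => y _; rewrite ltnS; case: (y <= M); rewrite ?mul1n ?mul0n.
Qed.

Lemma sum_antidiagonal L N (F : nat -> nat) : N < L ->
  \sum_(0 <= m < L) \sum_(0 <= y < L) (m + y == N) * F y = \sum_(0 <= y < N.+1) F y.
Proof.
move=> lt_NL; rewrite exchange_big /= -(sum_nat_leq_cut _ lt_NL).
apply: eq_bigr => y _; rewrite -big_distrl /=; congr (_ * _).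
case: (leqP y N) => [le_yN | lt_Ny].
  rewrite -[RHS](@sum_nat_delta L (N - y) (fun=> 1)) ?muln1; last lia.
  by apply: eq_bigr => m _; rewrite muln1; congr nat_of_bool; apply/eqP/eqP; lia.
by rewrite big1 // => m _; case: eqP => //; lia.
Qed.

Lemma count_predU_disjoint (T : Type) (a1 a2 : pred T) s :
  (forall v, a1 v && a2 v = false) -> count (predU a1 a2) s = count a1 s + count a2 s.
Proof.
move=> disj; have no_both : predI a1 a2 =1 pred0 by move=> v; apply: disj.
by rewrite -count_predUI (eq_count no_both) count_pred0 addn0.
Qed.

Lemma count_split_by (T : eqType) (s : seq T) (Q : pred T) (h : T -> nat) (P : pred nat) B :
  {in s, forall v, h v < B} ->
  count (fun v => Q v && P (h v)) s =
  \sum_(0 <= y < B) P y * count (fun v => Q v && (h v == y)) s.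
Proof.
elim: s => [|v s IH] hB /=; first by rewrite big1 // => y _; rewrite muln0.
rewrite IH => [|w w_s]; last by apply: hB; rewrite inE w_s orbT.
rewrite [RHS](eq_bigr (fun y => (h v == y) * (Q v && P y) +
                                P y * count (fun w => Q w && (h w == y)) s)); last first.
  by move=> y _; case: (Q v); case: (h v == y) => //=; case: (P y).
by rewrite big_split /= sum_nat_delta ?hB ?mem_head //; case: (Q v).
Qed.

Lemma count_iota_lt Z n : count (fun i => i < Z) (iota 0 n) = minn Z n.
Proof.
elim: n => [|n IH]; first by rewrite minn0.
by rewrite -addn1 iotaD count_cat IH /= add0n addn0; case: (ltnP n Z); lia.
Qed.

Section CountRank.
Variables (T : eqType) (lt : rel T) (s : seq T).
Hypotheses (uniq_s : uniq s) (ltxx : irreflexive lt) (ltT : transitive lt)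
  (lt_total : {in s &, forall v w, v != w -> lt v w || lt w v}).

Let below w := count (lt^~ w) s.

Lemma below_lt v w : v \in s -> lt v w -> below v < below w.
Proof.
move=> v_s lt_vw; have le_sub : subpred (predU (lt^~ v) (pred1 v)) (lt^~ w).
  by move=> u /orP[/ltT-> // | /eqP->].
apply: leq_trans (sub_count le_sub s).
rewrite count_predU_disjoint => [|u /=]; last by case: (u =P v) => [->|_]; rewrite ?ltxx ?andbF.
by rewrite count_uniq_mem // v_s addn1.
Qed.

Lemma below_lt_size w : w \in s -> below w < size s.
Proof.
move=> w_s; rewrite /below -(count_predC (lt^~ w) s) -[X in X < _]addn0 ltn_add2l.
by rewrite -has_count; apply/hasP; exists w => //=; rewrite ltxx.
Qed.

(* The values [below w] for [w] in [s] are exactly [0, ..., size s - 1]. *)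
Lemma count_below_lt Z : count (fun w => below w < Z) s = minn Z (size s).
Proof.
have rk_inj : {in s &, injective below}.
  move=> v w v_s w_s eq_rk; apply/eqP/negP => /negP neq_vw.
  by case/orP: (lt_total v_s w_s neq_vw) => [/(below_lt v_s) | /(below_lt w_s)]; rewrite eq_rk ltnn.
have uniq_rk : uniq (map below s) by rewrite map_inj_in_uniq.
have sub_rk : {subset map below s <= iota 0 (size s)}.
  by move=> i /mapP[w w_s ->]; rewrite mem_iota below_lt_size.
have [|_ mem_rk] := uniq_min_size uniq_rk sub_rk; first by rewrite size_map size_iota.
have perm_rk := uniq_perm uniq_rk (iota_uniq 0 _) mem_rk.
by rewrite -count_iota_lt -(permP perm_rk) count_map.
Qed.

End CountRank.

Lemma trunc_log_eqE p r e : 1 < p -> 0 < r ->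
  (trunc_log p r == e) = (p ^ e <= r < p ^ e.+1).
Proof.
move=> lt1p lt0r; apply/eqP/idP => [<- | /(trunc_log_eq lt1p)] //.
exact: trunc_log_bounds.
Qed.

(** * The probability of a string *)

Lemma letterP (a : 'I_4) : [\/ a = lA, a = lB, a = lC | a = lD].
Proof.
case: a => [[|[|[|[|m]]]] lt_a4] //;
  [constructor 1 | constructor 2 | constructor 3 | constructor 4];
  by apply/val_inj; rewrite /= inordK.
Qed.

Lemma letter_neq :
  ((lA == lB) = false) * ((lA == lC) = false) * ((lA == lD) = false) *
  ((lB == lA) = false) * ((lB == lC) = false) * ((lB == lD) = false) *
  ((lC == lA) = false) * ((lC == lB) = false) * ((lC == lD) = false) *
  ((lD == lA) = false) * ((lD == lB) = false) * ((lD == lC) = false).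
Proof. by do !split; apply/negbTE; rewrite -val_eqE /= !inordK. Qed.

Definition edge (a b : 'I_4) : bool :=
  if a == lA then (b == lA) || (b == lC)
  else if a == lB then (b == lB) || (b == lD) else true.

Definition is_CD (a : 'I_4) : bool := (a == lC) || (a == lD).

Definition adm (u : seq 'I_4) : bool := if u is a :: s then path edge a s else false.

Definition Knat (u : seq 'I_4) : nat := size u + 1 + Xcnt (size u) u.

Lemma Xcnt_cons a s : Xcnt (size s).+1 (a :: s) = count is_CD (belast a s).
Proof. by rewrite /Xcnt /=; elim: s a => //= b s IH a; rewrite IH. Qed.

Section Probability.
Variable R : realType.
Local Open Scope ring_scope.

Lemma quarterE : (4^-1 : R) = 2^-1 ^+ 2.
Proof. by rewrite exprVn expr2 -natrM. Qed.

Lemma trans_edge a b :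
  trans R a b = if edge a b then 2^-1 ^+ (1 + is_CD a) else 0.
Proof.
rewrite /trans /edge /is_CD.
by case: (letterP a) => ->; case: (letterP b) => ->; rewrite ?eqxx ?letter_neq ?quarterE.
Qed.

Lemma path_probE a s : path_prob R a s =
  if path edge a s then 2^-1 ^+ (size s + count is_CD (belast a s)) else 0.
Proof.
elim: s a => [|b s IH] a /=; first by rewrite expr0.
rewrite trans_edge IH; case: (edge a b); last by rewrite mul0r.
case: (path edge b s); last by rewrite mulr0.
by rewrite -exprD; congr (_ ^+ _); lia.
Qed.

Lemma probE u : prob R u = if adm u then 2^-1 ^+ Knat u else 0.
Proof.
case: u => [|a s] //=; rewrite path_probE /Knat Xcnt_cons.
case: (path edge a s); last by rewrite mulr0.
by rewrite quarterE -exprD /=; congr (_ ^+ _); lia.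
Qed.

Lemma admissibleE u : admissible R u = adm u.
Proof.
by rewrite /admissible probE; case: (adm u); rewrite ?exprn_gt0 ?invr_gt0 ?ltxx.
Qed.

Lemma KfE u : adm u -> Kf R u = (Knat u)%:R.
Proof.
have ln2_neq0 : ln (2 : R) != 0 by rewrite gt_eqF // ln_gt0 // ltr1n.
move=> adm_u; rewrite /Kf probE adm_u lnXn ?invr_gt0 // lnV; last by rewrite posrE.
by rewrite mulNrn opprK -[_ *+ Knat u]mulr_natl mulfK.
Qed.

End Probability.

Definition letters : seq 'I_4 := [:: lA; lB; lC; lD].

Fixpoint words (m : nat) : seq (seq 'I_4) :=
  if m is m'.+1 then [seq a :: s | a <- letters, s <- words m'] else [:: [::]].

Lemma mem_letters (a : 'I_4) : a \in letters.
Proof. by case: (letterP a) => ->; rewrite !inE eqxx ?orbT. Qed.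

Lemma mem_words m s : (s \in words m) = (size s == m).
Proof.
elim: m s => [|m IH] s; first by case: s.
apply/allpairsP/idP => [[[a t] /= [_ t_m ->]] | s_m]; first by rewrite /= eqSS -IH.
case: s s_m => [|a s] // s_m.
by exists (a, s); split; rewrite /= ?mem_letters ?IH.
Qed.

Lemma uniq_words m : uniq (words m).
Proof.
elim: m => [|m IH] //; apply: allpairs_uniq => //.
  by rewrite /letters /= !inE ?letter_neq.
by move=> [a s] [b t] _ _ /= [-> ->].
Qed.

Lemma perm_all_strings m : perm_eq (all_strings m) (words m).
Proof.
apply: uniq_perm; [|exact: uniq_words|].
  by rewrite map_inj_uniq ?enum_uniq //; apply: val_inj.
move=> s; rewrite mem_words; apply/mapP/idP => [[w _ ->]|s_m].
  by rewrite size_tuple.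
by exists (Tuple s_m); rewrite ?mem_enum.
Qed.

Lemma count_words_succ m (P : pred (seq 'I_4)) : count P (words m.+1) =
  count (fun s => P (lA :: s)) (words m) + count (fun s => P (lB :: s)) (words m) +
  count (fun s => P (lC :: s)) (words m) + count (fun s => P (lD :: s)) (words m).
Proof. by rewrite /= !count_cat !count_map addn0 !addnA. Qed.

Definition npaths m a x :=
  count (fun s => path edge a s && (count is_CD (belast a s) == x)) (words m).

Lemma npathsA m x : npaths m.+1 lA x = npaths m lA x + npaths m lC x.
Proof.
by rewrite /npaths count_words_succ /= /edge /is_CD ?eqxx ?letter_neq /= !count_pred0 !addn0.
Qed.

Lemma npathsB m x : npaths m.+1 lB x = npaths m lB x + npaths m lD x.
Proof.
by rewrite /npaths count_words_succ /= /edge /is_CD ?eqxx ?letter_neq /= !count_pred0 add0n addn0.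
Qed.

Lemma npathsCD m x (c : 'I_4) : is_CD c -> npaths m.+1 c x =
  if x is x'.+1 then npaths m lA x' + npaths m lB x' + npaths m lC x' + npaths m lD x'
  else 0.
Proof.
rewrite /npaths count_words_succ /= /is_CD => /orP[] /eqP -> /=;
  rewrite /edge ?eqxx ?letter_neq /=; case: x => [|x] //;
  by rewrite !(@eq_count _ _ pred0) ?count_pred0 // => s; rewrite andbF.
Qed.

Lemma sum_npaths m x :
  npaths m lA x + npaths m lB x + npaths m lC x + npaths m lD x = 4 * (2 ^ x * 'C(m, x)).
Proof.
elim: m x => [|m IH] [|x]; rewrite ?npathsA ?npathsB ?npathsCD ?/is_CD ?eqxx ?orbT //.
- by rewrite bin0n muln0.
- by move: (IH 0); rewrite !bin0; lia.
- by move: (IH x) (IH x.+1); rewrite binS !expnS; nia.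
Qed.

Lemma UE m j : U m j = 'C(m - j, j) * 2 ^ j.
Proof. by rewrite /U; case: leqP => // lt_m2j; rewrite bin_small ?mul0n //; lia. Qed.

Lemma count_level m x :
  count (fun v => adm v && (Xcnt m.+1 v == x)) (words m.+1) = 4 * U (m + x) x.
Proof.
rewrite count_words_succ UE addnK [_ * 2 ^ x]mulnC -sum_npaths /npaths.
by congr (_ + _ + _ + _); apply: eq_in_count => s;
  rewrite mem_words => /eqP <-; rewrite /= Xcnt_cons.
Qed.

Lemma Xcnt_le m v : Xcnt m v <= m.-1.
Proof.
rewrite /Xcnt; apply: leq_trans (count_size _ _) _.
by rewrite size_take; case: ltnP => //; lia.
Qed.

Definition level n x := [seq v <- words n | adm v && (Xcnt n v == x)].

Definition lexpos n x u := count (lexlt^~ u) (level n x).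

Lemma size_level m x : size (level m.+1 x) = 4 * U (m + x) x.
Proof. by rewrite size_filter count_level. Qed.

Lemma lexlt_irr : irreflexive lexlt.
Proof. by elim=> //= a v ->; rewrite ltnn andbF. Qed.

Lemma lexlt_trans : transitive lexlt.
Proof.
elim=> [|b v IH] [|a u] [|c w] //=.
case/orP=> [lt_ab | /andP[/eqP <- lt_uv]]; case/orP=> [lt_bc | /andP[/eqP <- lt_vw]].
- by rewrite (ltn_trans lt_ab lt_bc).
- by rewrite lt_ab.
- by rewrite lt_bc.
- by rewrite eqxx (IH _ _ lt_uv lt_vw) orbT.
Qed.

Lemma lexlt_total v w : size v = size w -> v != w -> lexlt v w || lexlt w v.
Proof.
elim: v w => [|a v IH] [|b w] //= [size_vw]; rewrite eqseq_cons negb_and.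
case: (ltngtP a b) => [||/val_inj eq_ab] //=; first by rewrite orbT.
by rewrite eq_ab eqxx /= => /IH ->.
Qed.

Lemma U0 m : U m 0 = 1.
Proof. by rewrite UE subn0 bin0 expn0. Qed.

Lemma U_small m j : m < j -> U m j = 0.
Proof. by move=> lt_mj; rewrite UE bin_small ?mul0n //; lia. Qed.

Lemma U_pascal m j : U m.+2 j.+1 = U m.+1 j.+1 + 2 * U m j.
Proof.
rewrite !UE subSS; case: (leqP j m) => [le_jm | lt_mj].
  by rewrite subSn // binS expnS; ring.
by rewrite !bin_small ?muln0 //; lia.
Qed.

Definition Upre N x := \sum_(0 <= j < x) U N j.
Definition Utot N := Upre N N.+1.

Lemma UpreS N x : Upre N x.+1 = Upre N x + U N x.
Proof. by rewrite /Upre big_nat_recr. Qed.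

Lemma Upre_pascal N x : Upre N.+2 x.+1 = Upre N.+1 x.+1 + 2 * Upre N x.
Proof.
rewrite /Upre !big_nat_recl // !U0 big_distrr -addnA -big_split /=.
by congr (_ + _); apply: eq_bigr => j _; rewrite U_pascal.
Qed.

Lemma Upre_Utot N x : N < x -> Upre N x = Utot N.
Proof.
move=> lt_Nx; rewrite /Utot /Upre (big_cat_nat (n := N.+1)) //=.
rewrite [X in _ + X]big1_seq ?addn0 // => j /andP[_].
by rewrite mem_index_iota => /andP[lt_Nj _]; rewrite U_small.
Qed.

Lemma Upre_le_Utot N x : Upre N x <= Utot N.
Proof.
case: (leqP x N.+1) => [le_xN | lt_Nx]; last by rewrite Upre_Utot //; lia.
by rewrite /Utot /Upre (big_cat_nat (n := x) (m := 0) (p := N.+1)) //= leq_addr.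
Qed.

Lemma Utot_pascal N : Utot N.+2 = Utot N.+1 + 2 * Utot N.
Proof. by rewrite {1}/Utot Upre_pascal (@Upre_Utot _ N.+3) ?(@Upre_Utot _ N.+2). Qed.

(* The [Utot N] are the Jacobsthal numbers. *)
Lemma Utot_add_succ N : Utot N + Utot N.+1 = 2 ^ N.+1.
Proof.
elim: N => [|N IH]; first by rewrite /Utot /Upre !big_nat_recr //= !big_geq // !U0.
by rewrite Utot_pascal expnS -IH; lia.
Qed.

Lemma sum_Utot N : 4 * \sum_(0 <= i < N) Utot i + 2 * Utot N + 2 = 2 ^ N.+2.
Proof.
elim: N => [|N IH]; first by rewrite big_geq // /Utot /Upre big_nat1 U0.
have := Utot_add_succ N; rewrite big_nat_recr //= !expnS in IH *; lia.
Qed.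

Lemma exp2_le_sum_Utot N : 2 ^ N.+1 <= 2 + 4 * \sum_(0 <= i < N) Utot i.
Proof.
case: N => [|N] //; rewrite -sum_Utot big_nat_recr //=; lia.
Qed.

Lemma sum_triangle L M : M <= L ->
  \sum_(0 <= m < L) \sum_(0 <= y < L) (m + y < M) * U (m + y) y = \sum_(0 <= N < M) Utot N.
Proof.
elim: M => [|M IH] le_ML.
  by rewrite [RHS]big_geq // big1 // => m _; rewrite big1.
rewrite big_nat_recr //= -IH ?(ltnW le_ML) // /Utot /Upre -(@sum_antidiagonal L) // -big_split.
apply: eq_bigr => m _; rewrite -big_split; apply: eq_bigr => y _ /=.
by rewrite ltnS leq_eqVlt; case: eqP => [->|_] /=; rewrite ?ltnn ?mul0n ?add0n ?addn0.
Qed.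

Lemma sum_U_above N x : x <= N ->
  \sum_(0 <= y < N.+1) (x < y) * U N y = Utot N - Upre N x.+1.
Proof.
move=> le_xN; apply/eqP; rewrite eq_sym -(eqn_add2r (Upre N x.+1)) subnK ?Upre_le_Utot //.
rewrite /Utot /Upre -(@sum_nat_leq_cut N.+1 x) // -big_split /=; apply/eqP/eq_bigr => y _.
by rewrite ltnNge; case: (y <= x); rewrite ?mul0n ?mul1n ?addn0.
Qed.

(** * The rank of a string in the code *)

Section Rank.
Variable R : realType.
Variables (u : seq 'I_4) (n x N : nat).
Hypotheses (adm_u : adm u) (size_u : size u = n) (Xcnt_u : Xcnt n u = x) (nxN : n + x = N.+1).

Lemma prec_key m v : adm v -> size v = m.+1 ->
  prec R v u = ((m + Xcnt m.+1 v < N) || ((m + Xcnt m.+1 v == N) && (x < Xcnt m.+1 v)))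
               || ((m.+1 == n) && ((Xcnt n v == x) && lexlt v u)).
Proof.
move=> adm_v size_v; rewrite /prec !KfE // ltr_nat eqr_nat /Knat size_v size_u Xcnt_u.
case: (eqVneq m.+1 n) => [eq_mn | neq_mn] /=; last by rewrite !orbF; lia.
by rewrite -eq_mn; case: (lexlt v u); lia.
Qed.

Lemma count_prec m L : m < L ->
  count (fun v => admissible R v && prec R v u) (all_strings m.+1) =
  \sum_(0 <= y < L) ((m + y < N) || ((m + y == N) && (x < y))) * (4 * U (m + y) y)
  + (m.+1 == n) * lexpos n x u.
Proof.
move=> lt_mL; rewrite (permP (perm_all_strings _)).
set key := fun y => (m + y < N) || ((m + y == N) && (x < y)).
rewrite (eq_in_count (a2 := predU (fun v => adm v && key (Xcnt m.+1 v))
           (fun v => (m.+1 == n) && ((adm v && (Xcnt n v == x)) && lexlt v u)))); last first.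
  move=> v; rewrite mem_words admissibleE => /eqP size_v /=.
  by case adm_v: (adm v); rewrite /= ?andbF // (prec_key _ size_v).
rewrite count_predU_disjoint => [|v]; last first.
  case: (eqVneq m.+1 n) => [eq_mn | _] /=; last by rewrite !andbF.
  by rewrite -eq_mn; case: (Xcnt _ v =P x) => [->|]; rewrite ?andbF //= /key; lia.
congr (_ + _).
  rewrite (@count_split_by _ _ _ _ _ L) => [|v]; last first.
    by rewrite mem_words => /eqP size_v; have := Xcnt_le m.+1 v; lia.
  by apply: eq_bigr => y _; rewrite -count_level.
case: (eqVneq m.+1 n) => [<- | _]; last by rewrite count_pred0.
by rewrite mul1n /lexpos /level count_filter; apply: eq_count => v /=; rewrite andbC.
Qed.

Lemma rank_formula : rank R u =
  1 + 4 * \sum_(0 <= k < N) Utot k + 4 * (Utot N - Upre N x.+1) + lexpos n x u.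
Proof.
have le_xn : x <= n.-1 by rewrite -Xcnt_u Xcnt_le.
rewrite /rank size_u -(big_mkord xpredT (fun m => count _ (all_strings m.+1))).
set L := 4 * n + 4.
under eq_big_nat => m /andP[_ lt_mL] do rewrite (count_prec lt_mL).
rewrite big_split /=.
have -> : \sum_(0 <= m < L) (m.+1 == n) * lexpos n x u = lexpos n x u.
  rewrite -[RHS](@sum_nat_delta L n.-1 (fun=> lexpos n x u)); last lia.
  by apply: eq_bigr => m _; congr (nat_of_bool _ * _); apply/eqP/eqP; lia.
have split_key m y : ((m + y < N) || ((m + y == N) && (x < y))) * (4 * U (m + y) y) =
    4 * ((m + y < N) * U (m + y) y) + 4 * ((m + y == N) * ((x < y) * U N y)).
  by case: (eqVneq (m + y) N) => [<-|neq_N]; lia.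
rewrite (eq_bigr (fun m => 4 * \sum_(0 <= y < L) (m + y < N) * U (m + y) y +
    4 * \sum_(0 <= y < L) (m + y == N) * ((x < y) * U N y))); last first.
  by move=> m _; rewrite !big_distrr -big_split; apply: eq_bigr => y _; rewrite split_key.
rewrite big_split -!big_distrr /= sum_triangle ?sum_antidiagonal ?sum_U_above /L; lia.
Qed.

(* [codelen u = K u - 1] says [rank u + 1] lies in [2^(N+1), 2^(N+2)), and the lower bound
   holds automatically. *)
Lemma Ind_lexpos : Ind R u = (lexpos n x u < 2 * Utot N - 4 * (Utot N - Upre N x.+1)).
Proof.
rewrite /Ind; have -> : (Kf R u - 1 = N.+1%:R)%R.
  by rewrite KfE // /Knat size_u Xcnt_u -addn1 addnAC nxN natrD addrK.
rewrite eqr_nat /codelen /bin_len rank_formula.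
rewrite trunc_log_eqE //.
have := sum_Utot N; have := exp2_le_sum_Utot N; have := Upre_le_Utot N x.+1.
by rewrite !expnS; lia.
Qed.

End Rank.

Lemma count_Ind_level R n x N : n + x = N.+1 ->
  count (fun v => ((Xcnt n v == x) && Ind R v) && adm v) (words n) =
  minn (2 * Utot N - 4 * (Utot N - Upre N x.+1)) (size (level n x)).
Proof.
move=> nxN; have uniq_lvl : uniq (level n x) by rewrite filter_uniq // uniq_words.
have total_lvl : {in level n x &, forall v w, v != w -> lexlt v w || lexlt w v}.
  move=> v w; rewrite !mem_filter !mem_words => /andP[_ /eqP size_v] /andP[_ /eqP size_w].
  by apply: lexlt_total; rewrite size_v size_w.
rewrite -(count_below_lt uniq_lvl lexlt_irr lexlt_trans total_lvl) /level count_filter.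
apply: eq_in_count => v; rewrite mem_words => /eqP size_v /=.
case adm_v: (adm v); case: (Xcnt n v =P x) => X_v; rewrite /= ?andbF ?andbT //.
by rewrite (Ind_lexpos R adm_v size_v X_v nxN).
Qed.

Section G.
Variable R : realType.
Local Open Scope ring_scope.

Lemma sum_prob_tuples n (P : pred (seq 'I_4)) :
  \sum_(w : n.-tuple 'I_4 | P w) prob R w = \sum_(v <- words n | P v) prob R v.
Proof.
rewrite -(perm_big _ (perm_all_strings n)) /all_strings big_map big_enum_cond.
by apply: eq_bigl => w; rewrite inE.
Qed.

Lemma sum_prob_Knat (s : seq (seq 'I_4)) (P : pred (seq 'I_4)) K :
  {in s, forall v, P v -> Knat v = K} ->
  \sum_(v <- s | P v) prob R v = (count (fun v => P v && adm v) s)%:R * 2^-1 ^+ K.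
Proof.
elim: s => [|v s IH] K_s; first by rewrite big_nil mul0r.
rewrite big_cons /= IH => [|w w_s]; last by apply: K_s; rewrite inE w_s orbT.
case P_v: (P v) => //=; rewrite probE (K_s v (mem_head _ _) P_v).
by case: (adm v); rewrite /= ?add0r // natrD mulrDl mul1r.
Qed.

Lemma g_minn n x N : (n + x = N.+1)%N -> (x < n)%N ->
  g R n x = (minn (2 * Utot N - 4 * (Utot N - Upre N x.+1)) (4 * U N x))%:R
            / (4 * U N x)%:R.
Proof.
move=> nxN lt_xn.
have Knat_level : {in words n, forall v, Xcnt n v == x -> Knat v = N.+2}.
  by move=> v; rewrite mem_words => /eqP size_v /eqP X_v; rewrite /Knat size_v X_v; lia.
rewrite /g (sum_prob_tuples n (fun w => (Xcnt n w == x) && Ind R w)).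
rewrite (sum_prob_tuples n (fun w => Xcnt n w == x)).
rewrite (@sum_prob_Knat _ _ N.+2) => [|v v_s /andP[X_v _]]; last exact: Knat_level v v_s X_v.
rewrite (@sum_prob_Knat _ _ N.+2) => [|v v_s X_v]; last exact: Knat_level v v_s X_v.
rewrite -mulf_div divff ?mulr1; last by rewrite expf_neq0 // invr_eq0 pnatr_eq0.
have size_lvl : size (level n x) = (4 * U N x)%N.
  by case: n nxN lt_xn {Knat_level} => // m nxN _; rewrite size_level; congr (4 * U _ x)%N; lia.
rewrite (count_Ind_level R nxN) -size_lvl size_filter.
by congr (_%:R / _%:R); apply: eq_count => v; rewrite andbC.
Qed.

(* Mass of [U N] strictly below [x] minus mass strictly above [x]. *)
Definition Ubalance N x : int := ((Upre N x)%:Z + (Upre N x.+1)%:Z - (Utot N)%:Z)%R.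

Lemma g_balance n x N : (n + x = N.+1)%N -> (x < n)%N ->
  - (U N x)%:Z <= Ubalance N x <= (U N x)%:Z ->
  g R n x = 2^-1 + (Ubalance N x)%:~R / (2 * (U N x)%:R).
Proof.
move=> nxN lt_xn /andP[lo hi]; rewrite (g_minn nxN lt_xn).
have U_neq0 : (U N x)%:R != 0 :> R.
  by rewrite pnatr_eq0 -lt0n UE muln_gt0 expn_gt0 bin_gt0; lia.
set Z := minn _ _.
have Z_bal : Z%:Z = 2 * Ubalance N x + 2 * (U N x)%:Z.
  by have := Upre_le_Utot N x.+1; have := UpreS N x; rewrite /Z /Ubalance in lo hi *; lia.
by rewrite -[Z%:R]/(Z%:Z%:~R) Z_bal intrD !intrM natrM; field.
Qed.

End G.

(** * The balances at N = 3t, 3t - 1 and 3t - 2 *)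

Lemma bin_mid_sym n : 'C(2 * n + 1, n) = 'C(2 * n + 1, n.+1).
Proof. by rewrite -bin_sub; [congr binomial | ]; lia. Qed.

Lemma bin_mid_double n : 'C(2 * n + 2, n.+1) = 2 * 'C(2 * n + 1, n.+1).
Proof. by rewrite addnS binS bin_mid_sym; lia. Qed.

Lemma Ct_U t : Ct t = U (3 * t) t.
Proof. by rewrite /Ct UE; congr ('C(_, t) * _)%N; lia. Qed.

Lemma Ct_gt0 t : 0 < Ct t.
Proof. by rewrite /Ct muln_gt0 expn_gt0 bin_gt0; lia. Qed.

Lemma Ct_succ_U t : Ct t.+1 = U (3 * t).+3 t.+1.
Proof. by rewrite Ct_U; congr U; lia. Qed.

Lemma U_half t : 2 * U (3 * t).+2 t.+1 = Ct t.+1.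
Proof.
rewrite Ct_succ_U !UE (_ : (3 * t).+2 - t.+1 = 2 * t + 1); last lia.
rewrite (_ : (3 * t).+3 - t.+1 = 2 * t + 2); last lia.
by rewrite bin_mid_double expnS; ring.
Qed.

Lemma U_quarter t : 4 * U (3 * t).+1 t = Ct t.+1.
Proof.
rewrite Ct_succ_U !UE (_ : (3 * t).+1 - t = 2 * t + 1); last lia.
rewrite (_ : (3 * t).+3 - t.+1 = 2 * t + 2); last lia.
by rewrite bin_mid_double bin_mid_sym !expnS; ring.
Qed.

Lemma Ct_succ t : Ct t.+2 = 4 * Ct t.+1 + 8 * U (3 * t).+2 t.
Proof.
rewrite !Ct_succ_U !UE (_ : (3 * t.+1).+3 - t.+2 = 2 * t.+1 + 2); last lia.
rewrite (_ : (3 * t).+3 - t.+1 = 2 * t + 2); last lia.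
rewrite (_ : (3 * t).+2 - t = 2 * t + 2); last lia.
rewrite bin_mid_double -bin_mid_sym (_ : 2 * t.+1 + 1 = (2 * t + 2).+1); last lia.
by rewrite binS !expnS; ring.
Qed.

Lemma U_pair t : U (3 * t).+4 t.+1 + U (3 * t).+4 t.+2 = Ct t.+1 + 6 * U (3 * t).+2 t.
Proof.
rewrite Ct_succ_U !UE (_ : (3 * t).+4 - t.+1 = (2 * t + 2).+1); last lia.
rewrite (_ : (3 * t).+4 - t.+2 = 2 * t + 2); last lia.
rewrite (_ : (3 * t).+3 - t.+1 = 2 * t + 2); last lia.
rewrite (_ : (3 * t).+2 - t = 2 * t + 2); last lia.
have sym : 'C(2 * t + 2, t.+2) = 'C(2 * t + 2, t) by rewrite -bin_sub; [congr binomial | ]; lia.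
by rewrite binS sym !expnS; ring.
Qed.

Local Open Scope ring_scope.

Lemma Ubalance_pascal N x : Ubalance N.+2 x.+1 = Ubalance N.+1 x.+1 + 2 * Ubalance N x.
Proof. by rewrite /Ubalance !Upre_pascal Utot_pascal !PoszD ?PoszM; ring. Qed.

Lemma Ubalance_succ N x : Ubalance N x.+1 = Ubalance N x + (U N x)%:Z + (U N x.+1)%:Z.
Proof. by rewrite /Ubalance (UpreS N x.+1) (UpreS N x) !PoszD; ring. Qed.

Lemma Dt_Ubalance t : Dt t = Ubalance (3 * t) t.
Proof.
have split_tot : Utot (3 * t) = (Upre (3 * t) t.+1 + \sum_(t.+1 <= j < (3 * t).+1) U (3 * t) j)%N.
  by rewrite /Utot /Upre -big_cat_nat //; lia.
have sumz k l : (\sum_(k <= j < l) U (3 * t) j)%N%:Z = \sum_(k <= j < l) (U (3 * t) j)%:Z.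
  by rewrite -natz natr_sum; apply: eq_bigr => j _; rewrite natz.
by rewrite /Dt /Ubalance split_tot /Upre -!sumz; lia.
Qed.

(* For t = s.+1, the balances governing g_2t(t) and g_2t(t - 1). *)
Definition Fbal s := Ubalance (3 * s).+2 s.+1.
Definition Gbal s := Ubalance (3 * s).+1 s.

Lemma Dt_succ_pascal s : Dt s.+1 = Fbal s + 2 * Gbal s.
Proof. by rewrite Dt_Ubalance mulnS Ubalance_pascal. Qed.

Lemma Gbal_succ s : Gbal s.+1 =
  Dt s.+1 + 2 * (Fbal s - (U (3 * s).+2 s)%:Z - (U (3 * s).+2 s.+1)%:Z).
Proof.
rewrite /Gbal /Fbal Dt_Ubalance !mulnS (Ubalance_pascal (3 * s).+2 s).
by rewrite (Ubalance_succ (3 * s).+2 s); ring.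
Qed.

Lemma Fbal_succ s : Fbal s.+1 =
  Gbal s.+1 + (U (3 * s).+4 s.+1)%:Z + (U (3 * s).+4 s.+2)%:Z + 2 * Dt s.+1.
Proof. by rewrite /Fbal /Gbal Dt_Ubalance !mulnS Ubalance_pascal Ubalance_succ. Qed.

Definition balance_inv s :=
  2 * Fbal s + 2 * Dt s.+1 = (Ct s.+1)%:Z /\ 4 * Gbal s + (Ct s.+1)%:Z = 4 * Dt s.+1.

Lemma balance_inv_step s :
  balance_inv s -> balance_inv s.+1 /\ Dt s.+2 + Dt s.+1 = (Ct s.+1)%:Z.
Proof.
have := Gbal_succ s; have := Fbal_succ s; have := Dt_succ_pascal s.+1.
have := U_half s; have := U_pair s; have := Ct_succ s; rewrite /balance_inv; lia.
Qed.

Lemma balance_invariant s : balance_inv s.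
Proof.
elim: s => [|s /balance_inv_step[] //].
by rewrite /balance_inv /Fbal /Gbal /Dt /Ubalance /Utot /Upre unlock; vm_compute.
Qed.

Lemma Dt_succ_succ s : Dt s.+2 = (Ct s.+1)%:Z - Dt s.+1.
Proof. by have [_] := balance_inv_step (balance_invariant s); lia. Qed.

Lemma Dt_bounds t : (0 < t)%N -> 0 <= Dt t /\ 2 * Dt t <= (Ct t)%:Z.
Proof.
case: t => // s _; elim: s => [|s [ge0 le_Ct]].
  by rewrite /Dt /Ct unlock; vm_compute.
by have := Dt_succ_succ s; have := Ct_succ s; lia.
Qed.

Section Values.
Variable R : realType.

Lemma g_odd_mid t : (1 <= t)%N -> g R (2 * t).+1 t = 2^-1 + (Dt t)%:~R / (2 * (Ct t)%:R).
Proof.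
move=> t_gt0; have [ge0 le_Ct] := Dt_bounds t_gt0.
have bal : - (U (3 * t) t)%:Z <= Ubalance (3 * t) t <= (U (3 * t) t)%:Z.
  by rewrite -Dt_Ubalance -Ct_U; apply/andP; split; lia.
by rewrite (g_balance _ _ _ bal) -?Dt_Ubalance -?Ct_U //; lia.
Qed.

Lemma g_even_mid t : (1 <= t)%N -> g R (2 * t) t = 1 - (Dt t)%:~R / (Ct t)%:R.
Proof.
case: t => // s _; have [ge0 le_Ct] := Dt_bounds (ltn0Sn s).
have [invF _] := balance_invariant s; have U_Ct := U_half s; have Ct_pos := Ct_gt0 s.+1.
have bal : - (U (3 * s).+2 s.+1)%:Z <= Fbal s <= (U (3 * s).+2 s.+1)%:Z.
  by apply/andP; split; lia.
rewrite (g_balance _ _ _ bal) -/(Fbal s); try lia.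
have U_neq0 : (U (3 * s).+2 s.+1)%:R != 0 :> R by rewrite pnatr_eq0; lia.
have hF : 2 * (Fbal s)%:~R + 2 * (Dt s.+1)%:~R = (Ct s.+1)%:R :> R.
  move: (congr1 (fun z : int => z%:~R : R) invF).
  by rewrite intrD [(2 * Fbal s)%:~R]intrM [(2 * Dt s.+1)%:~R]intrM.
have hU : 2 * (U (3 * s).+2 s.+1)%:R = (Ct s.+1)%:R :> R by rewrite -U_Ct natrM.
have hD : (Dt s.+1)%:~R = (U (3 * s).+2 s.+1)%:R - (Fbal s)%:~R :> R by lra.
by rewrite -hU hD; field.
Qed.

Lemma g_even_pred t : (1 <= t)%N -> g R (2 * t) t.-1 = 2 * (Dt t)%:~R / (Ct t)%:R.
Proof.
case: t => // s _; have [ge0 le_Ct] := Dt_bounds (ltn0Sn s).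
have [_ invG] := balance_invariant s; have U_Ct := U_quarter s; have Ct_pos := Ct_gt0 s.+1.
have bal : - (U (3 * s).+1 s)%:Z <= Gbal s <= (U (3 * s).+1 s)%:Z.
  by apply/andP; split; lia.
rewrite (g_balance _ _ _ bal) -/(Gbal s); try lia.
have U_neq0 : (U (3 * s).+1 s)%:R != 0 :> R by rewrite pnatr_eq0; lia.
have hG : 4 * (Gbal s)%:~R + (Ct s.+1)%:R = 4 * (Dt s.+1)%:~R :> R.
  move: (congr1 (fun z : int => z%:~R : R) invG).
  by rewrite intrD [(4 * Gbal s)%:~R]intrM [(4 * Dt s.+1)%:~R]intrM.
have hU : 4 * (U (3 * s).+1 s)%:R = (Ct s.+1)%:R :> R by rewrite -U_Ct natrM.
have hD : (Dt s.+1)%:~R = (Gbal s)%:~R + (U (3 * s).+1 s)%:R :> R by lra.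
by rewrite -hU hD; field.
Qed.

End Values.

Theorem mainTheorem11 (R : realType) (t : nat) (ht : (1 <= t)%N) :
  [/\ g R (2 * t).+1 t = 2^-1 + (Dt t)%:~R / (2 * (Ct t)%:R),
      g R (2 * t) t = 1 - (Dt t)%:~R / (Ct t)%:R,
      g R (2 * t) t.-1 = 2 * (Dt t)%:~R / (Ct t)%:R
    & g R (2 * t) t.-1 + g R (2 * t) t = 1 + (Dt t)%:~R / (Ct t)%:R].
Proof.
split; rewrite ?g_odd_mid ?g_even_mid ?g_even_pred //; ring.
Qed.
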